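(* Let $A=(a_i^j)$ and $B=(b_i^j)$ be $n\times n$ matrices with all entries in $\{0,1\}$, such that for some $r\in\{1,\dots,n-1\}$, $a_i^j=b_i^j=0$ whenever $j-i\ne r$. Let $\xi>0$. If there exists an invertible matrix $C$ with $\|C\|,\|C^{-1}\|\le\xi$ and $\|AC-CB\|=\varepsilon<\frac{1}{n!\,\xi^n}$, then $\mathrm{rank}\,A=\mathrm{rank}\,B$.
   Context: $\|\cdot\|$ is the operator norm on $n\times n$ complex matrices; $a_i^j$ is the entry in row $i$, column $j$. *)

From HB Require Import structures.
From mathcomp Require Import all_boot all_order all_algebra.
From mathcomp Require Import complex.
From mathcomp Require Import classical_sets reals.
Set Implicit Arguments. Unset Strict Implicit. Unset Printing Implicit Defensive.
Import Order.TTheory GRing.Theory Num.Theory.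
Local Open Scope ring_scope.
Local Open Scope classical_set_scope.

Definition vnorm (R : realType) (n : nat) (x : 'cV[R[i]]_n) : R :=
  Num.sqrt (\sum_(i < n) ((complex.Re (x i 0)) ^+ 2 + (complex.Im (x i 0)) ^+ 2)).

Definition opnorm (R : realType) (n : nat) (M : 'M[R[i]]_n) : R :=
  sup [set vnorm (M *m x) | x in [set x : 'cV[R[i]]_n | vnorm x <= 1]].

(* A 0/1 matrix supported on a single diagonal has at most one 1 in each row
   and column, so it is a partial isometry: A A^* A = A.  For a partial
   isometry the projection P = A^* A has rank rank A and A is isometric on
   its range.  If rank X < rank A, the range of P meets ker X in some x <> 0,
   and then |x| = |A x| = |(A - X) x| <= ||A - X|| |x|, so ||A - X|| >= 1.
   Apply this to X = C B C^-1, where A - X = (A C - C B) C^-1, and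
   symmetrically to B and C^-1 A C: both differences have norm at most
   eps xi, and eps xi < 1 because xi >= 1 (from 1 <= ||C|| ||C^-1|| <= xi^2),
   which is all that is used of the bound eps < 1 / (n! xi^n). *)

From HB Require Import structures.
From mathcomp Require Import all_boot all_order all_algebra.
From mathcomp Require Import complex.
From mathcomp Require Import classical_sets reals.
From mathcomp Require Import lra zify.
Set Implicit Arguments. Unset Strict Implicit. Unset Printing Implicit Defensive.
Import Order.TTheory GRing.Theory Num.Theory.
Local Open Scope ring_scope.
Local Open Scope sesquilinear_scope.

Section VectorNorm.
Variables (R : realType) (n : nat).
Implicit Types x y : 'cV[R[i]]_n.

Lemma vnormE x : vnorm x = Num.sqrt (\sum_i complex.Re (`|x i 0| ^+ 2)).
Proof. by congr Num.sqrt; apply: eq_bigr => i _; rewrite -add_Re2_Im2. Qed.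

Lemma vnorm_ge0 x : 0 <= vnorm x.
Proof. exact: sqrtr_ge0. Qed.

Lemma sqr_vnorm x : (vnorm x)%:C%C ^+ 2 = \sum_i `|x i 0| ^+ 2.
Proof.
rewrite -rmorphXn sqr_sqrtr; last by apply: sumr_ge0 => i _; rewrite addr_ge0 ?sqr_ge0.
by rewrite rmorph_sum; apply: eq_bigr => i _; rewrite /= add_Re2_Im2.
Qed.

Lemma sqr_vnorm_mx x : (vnorm x)%:C%C ^+ 2 = (x^t* *m x) 0 0.
Proof. by rewrite sqr_vnorm mxE; apply: eq_bigr => i _; rewrite normCK mulrC !mxE. Qed.

Lemma normr_le_vnorm x i : `|x i 0| <= (vnorm x)%:C%C.
Proof.
rewrite -(ler_pXn2r (isT : 0 < 2)%N) ?nnegrE ?normr_ge0 ?ler0c ?vnorm_ge0 //.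
by rewrite sqr_vnorm (bigD1 i) //= lerDl sumr_ge0 // => k _; rewrite exprn_ge0.
Qed.

Lemma ler_vnorm x y : (forall i, `|x i 0| <= `|y i 0|) -> vnorm x <= vnorm y.
Proof.
move=> le_xy; rewrite !vnormE ler_wsqrtr // ler_sum // => i _.
have : `|x i 0| ^+ 2 <= `|y i 0| ^+ 2 by apply: lerXn2r; rewrite ?nnegrE.
by rewrite lecE => /andP[].
Qed.

Lemma eq_vnorm x y : (forall i, `|x i 0| = `|y i 0|) -> vnorm x = vnorm y.
Proof. by move=> eq_xy; apply/le_anti; rewrite !ler_vnorm // => i; rewrite eq_xy. Qed.

Lemma vnormN x : vnorm (- x) = vnorm x.
Proof. by apply: eq_vnorm => i; rewrite mxE normrN. Qed.

Lemma vnorm0 : vnorm (0 : 'cV[R[i]]_n) = 0.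
Proof. by rewrite vnormE big1 ?sqrtr0 // => i _; rewrite mxE normr0 expr0n. Qed.

Lemma vnormZ (a : R) x : vnorm (a%:C%C *: x) = `|a| * vnorm x.
Proof.
rewrite !vnormE -sqrtr_sqr -sqrtrM ?sqr_ge0 // mulr_sumr.
congr Num.sqrt; apply: eq_bigr => i _.
rewrite mxE normrM exprMn -(add_Re2_Im2 a%:C%C) /= expr0n addr0.
by rewrite !(mul0r, subr0).
Qed.

Lemma vnorm_gt0 x : x != 0 -> 0 < vnorm x.
Proof.
rewrite vnormE sqrtr_gt0; apply: contraNT; rewrite -leNgt => sum_le0.
apply/eqP/matrixP => i j; rewrite (ord1 j) mxE.
have Re_ge0 k : 0 <= complex.Re (`|x k 0| ^+ 2).
  by rewrite -lecR RRe_real ?realX ?normr_real // exprn_ge0.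
have /eqP : complex.Re (`|x i 0| ^+ 2) = 0.
  apply: (psumr_eq0P (P := xpredT) (fun k _ => Re_ge0 k)) => //.
  by apply/le_anti; rewrite sum_le0 sumr_ge0.
rewrite -(inj_eq (@complexI _)) RRe_real ?realX ?normr_real //.
by rewrite expf_eq0 normr_eq0 => /eqP.
Qed.

End VectorNorm.

Section OperatorNorm.
Local Open Scope classical_set_scope.
Variables (R : realType) (n : nat).
Implicit Types (M N : 'M[R[i]]_n) (x : 'cV[R[i]]_n).

Let image_unit_ball M := [set vnorm (M *m x) | x in [set x | vnorm x <= 1]].

Lemma opnorm_has_ubound M : has_ubound (image_unit_ball M).
Proof.
exists (vnorm (\col_i \sum_j `|M i j|)) => _ [x x_le1 <-].
apply: ler_vnorm => i; rewrite !mxE [X in _ <= X]ger0_norm ?sumr_ge0 //.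
rewrite (le_trans (ler_norm_sum _ _ _)) // ler_sum // => j _.
rewrite normrM ler_piMr // (le_trans (normr_le_vnorm x j)) //.
by rewrite -[1]/(1%:C%C) lecR.
Qed.

Lemma opnorm_ge0 M : 0 <= opnorm M.
Proof.
apply: (ub_le_sup (opnorm_has_ubound M)); exists 0; first by rewrite /= vnorm0 ler01.
by rewrite mulmx0 vnorm0.
Qed.

Lemma vnorm_mulmx_le M x : vnorm (M *m x) <= opnorm M * vnorm x.
Proof.
have [->|x_neq0] := eqVneq x 0; first by rewrite mulmx0 vnorm0 mulr0.
have x_gt0 := vnorm_gt0 x_neq0.
pose u := (vnorm x)^-1%:C%C *: x.
have u_le1 : vnorm u <= 1 by rewrite vnormZ ger0_norm ?invr_ge0 ?vnorm_ge0 // mulVf ?gt_eqF.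
have := ub_le_sup (opnorm_has_ubound M) (ex_intro2 _ _ u u_le1 erefl).
rewrite -scalemxAr vnormZ ger0_norm ?invr_ge0 ?vnorm_ge0 //.
by rewrite ler_pdivrMl // mulrC.
Qed.

Lemma opnorm_le M k :
  0 <= k -> (forall x, vnorm (M *m x) <= k * vnorm x) -> opnorm M <= k.
Proof.
move=> k_ge0 Mk; apply: ge_sup; first by exists (vnorm (M *m 0)), 0; rewrite /= ?vnorm0.
by move=> _ [x x_le1 <-]; rewrite (le_trans (Mk x)) // ler_piMr.
Qed.

Lemma opnormM M N : opnorm (M *m N) <= opnorm M * opnorm N.
Proof.
apply: opnorm_le => [|x]; first by rewrite mulr_ge0 ?opnorm_ge0.
rewrite -mulmxA (le_trans (vnorm_mulmx_le _ _)) // -mulrA ler_wpM2l ?opnorm_ge0 //.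
exact: vnorm_mulmx_le.
Qed.

Lemma opnormN M : opnorm (- M) = opnorm M.
Proof.
suff opnormN_le N : opnorm (- N) <= opnorm N.
  by apply/le_anti; rewrite opnormN_le -{1}[M]opprK opnormN_le.
by apply: opnorm_le (opnorm_ge0 N) _ => x; rewrite mulNmx vnormN vnorm_mulmx_le.
Qed.

Lemma opnorm_mulmx_invmx_ge1 (C : 'M[R[i]]_n) :
  (0 < n)%N -> C \in unitmx -> 1 <= opnorm C * opnorm (invmx C).
Proof.
move=> n_gt0 C_unit; pose x : 'cV[R[i]]_n := const_mx 1.
have x_neq0 : x != 0.
  by apply/eqP => /matrixP/(_ (Ordinal n_gt0) 0)/eqP; rewrite !mxE oner_eq0.
have := vnorm_mulmx_le (C *m invmx C) x; rewrite {1}mulmxV // mul1mx => le_x.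
rewrite -(ler_pM2r (vnorm_gt0 x_neq0)) mul1r (le_trans le_x) //.
by rewrite ler_wpM2r ?vnorm_ge0 ?opnormM.
Qed.

End OperatorNorm.

Lemma idempotent_fixed_in_ker (F : fieldType) n (P D : 'M[F]_n) :
  P *m P = P -> (\rank D < \rank P)%N ->
  exists x : 'cV[F]_n, [/\ x != 0, P *m x = x & D *m x = 0].
Proof.
(* In row vectors: rank P^T + rank (kermx D^T) = rank P + n - rank D > n. *)
move=> PP rkDP; have : (P^T :&: kermx D^T)%MS != 0.
  rewrite -mxrank_eq0 -lt0n.
  have := mxrank_sum_cap P^T (kermx D^T); rewrite mxrank_ker !mxrank_tr.
  have := rank_leq_col (P^T + kermx D^T)%MS; lia.
case/rowV0Pn => v; rewrite sub_capmx => /andP[/submxP [w ->] /sub_kermxP vD] v_neq0.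
exists (w *m P^T)^T; split.
- by rewrite trmx_eq0.
- by rewrite -[P in P *m _]trmxK -trmx_mul -mulmxA -trmx_mul PP.
- by rewrite -[D]trmxK -trmx_mul vD trmx0.
Qed.

Section PartialIsometry.
Variables (R : realType) (n : nat) (A : 'M[R[i]]_n).
Hypothesis A_partial_isometry : A *m A^t* *m A = A.

Let P := A^t* *m A.

Lemma partial_isometry_idem : P *m P = P.
Proof. by rewrite /P -mulmxA (mulmxA A) A_partial_isometry. Qed.

Lemma partial_isometry_rank : \rank P = \rank A.
Proof.
apply/eqP; rewrite eqn_leq mxrankM_maxr /=.
by rewrite -{1}A_partial_isometry -mulmxA mxrankM_maxr.
Qed.

Lemma partial_isometry_vnorm x : P *m x = x -> vnorm (A *m x) = vnorm x.
Proof.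
move=> Px; apply: complexI; apply/eqP.
rewrite -(eqrXn2 (isT : 0 < 2)%N) ?ler0c ?vnorm_ge0 // !sqr_vnorm_mx.
by rewrite trmx_mul map_mxM -mulmxA (mulmxA _ A) -/P Px.
Qed.

Lemma partial_isometry_rank_le X : opnorm (A - X) < 1 -> (\rank A <= \rank X)%N.
Proof.
move=> AX_lt1; rewrite leqNgt; apply/negP => rkXA.
have [|x [x_neq0 Px Xx]] := idempotent_fixed_in_ker partial_isometry_idem (D := X).
  by rewrite partial_isometry_rank.
have := vnorm_mulmx_le (A - X) x; rewrite mulmxBl Xx subr0 partial_isometry_vnorm //.
by rewrite -[X in X <= _]mul1r ler_pM2r ?vnorm_gt0 // leNgt AX_lt1.
Qed.

End PartialIsometry.

Section PartialPermutation.
Variables (F : pzRingType) (m n : nat) (A : 'M[F]_(m, n)).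
Hypothesis A01 : forall i j, A i j = 0 \/ A i j = 1.
Hypothesis A_row_inj : forall i j k, A i j != 0 -> A i k != 0 -> j = k.
Hypothesis A_col_inj : forall i k j, A i j != 0 -> A k j != 0 -> i = k.

Lemma partial_perm_trmx_mul : A^T *m A = diag_mx (\row_j \sum_i A i j).
Proof.
apply/matrixP => j k; rewrite !mxE; under eq_bigr => i _ do rewrite mxE.
have [<-|njk] := eqVneq j k; rewrite ?mulr1n ?mulr0n.
  by apply: eq_bigr => i _; case: (A01 i j) => ->; rewrite ?mul0r ?mulr1.
apply: big1 => i _; have [->|Aij_neq0] := eqVneq (A i j) 0; first by rewrite mul0r.
have [->|Aik_neq0] := eqVneq (A i k) 0; first by rewrite mulr0.
by case/eqP: njk; apply: A_row_inj Aij_neq0 Aik_neq0.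
Qed.

Lemma partial_perm_mul_trmx_mul : A *m A^T *m A = A.
Proof.
rewrite -mulmxA partial_perm_trmx_mul; apply/matrixP => i j; rewrite mul_mx_diag !mxE.
have [->|Aij_neq0] := eqVneq (A i j) 0; first by rewrite mul0r.
rewrite (bigD1 i) //= big1 ?addr0 => [|k k_neq_i].
  by case: (A01 i j) Aij_neq0 => ->; rewrite ?eqxx // mulr1.
have [//|Akj_neq0] := eqVneq (A k j) 0.
by rewrite (A_col_inj Akj_neq0 Aij_neq0) eqxx in k_neq_i.
Qed.

End PartialPermutation.

Lemma single_diagonal_partial_isometry (R : realType) n (r : int) (A : 'M[R[i]]_n) :
  (forall i j, A i j = 0 \/ A i j = 1) ->
  (forall i j : 'I_n, j%:Z - i%:Z != r -> A i j = 0) ->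
  A *m A^t* *m A = A.
Proof.
move=> A01 A_diag.
have A_supp i j : A i j != 0 -> j%:Z - i%:Z = r by apply: contraNeq => /A_diag ->.
have -> : A^t* = A^T.
  by apply/matrixP => i j; rewrite !mxE; case: (A01 j i) => ->; rewrite ?conjC0 ?conjC1.
apply: partial_perm_mul_trmx_mul => // [i j k | i k j] /A_supp + /A_supp => ? ?.
  all: by apply/ord_inj; lia.
Qed.

Lemma mxrank_conj (F : fieldType) n (C X : 'M[F]_n) :
  C \in unitmx -> \rank (C *m X *m invmx C) = \rank X.
Proof.
move=> C_unit; rewrite mxrankMfree ?row_free_unit ?unitmx_inv //.
by rewrite (eqmxMfull X _) ?row_full_unit.
Qed.

Lemma mul_lt1_of_lt_inv_fact (R : realFieldType) n (xi eps : R) :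
  (0 < n)%N -> 1 <= xi -> 0 <= eps -> eps < 1 / (n`!%:R * xi ^+ n) -> eps * xi < 1.
Proof.
move=> n_gt0 xi_ge1 eps_ge0; have xi_gt0 : 0 < xi by apply: lt_le_trans xi_ge1.
have xi_le : xi <= n`!%:R * xi ^+ n.
  by rewrite -[xi in xi <= _]mul1r ler_pM ?ler1n ?fact_gt0 ?ler_eXnr ?(ltW xi_gt0).
rewrite ltr_pdivlMr ?mul1r ?(lt_le_trans xi_gt0) // => lt1.
exact: le_lt_trans (ler_wpM2l eps_ge0 xi_le) lt1.
Qed.

Theorem lemma22 (R : realType) (n r : nat) (A B C : 'M[R[i]]_n) (xi eps : R) :
  (forall i j, A i j = 0 \/ A i j = 1) ->
  (forall i j, B i j = 0 \/ B i j = 1) ->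
  (1 <= r < n)%N ->
  (forall i j : 'I_n, (j%:Z - i%:Z != r%:Z)%R -> A i j = 0 /\ B i j = 0) ->
  0 < xi ->
  C \in unitmx ->
  opnorm C <= xi ->
  opnorm (invmx C) <= xi ->
  opnorm (A *m C - C *m B) = eps ->
  eps < 1 / ((n`!)%:R * xi ^+ n) ->
  \rank A = \rank B.
Proof.
move=> A01 B01 /andP[_ r_lt_n] AB_diag xi_gt0 C_unit C_le Cinv_le E_eq eps_lt.
have n_gt0 : (0 < n)%N by apply: leq_ltn_trans r_lt_n.
have A_pi := single_diagonal_partial_isometry A01 (fun i j ij => (AB_diag i j ij).1).
have B_pi := single_diagonal_partial_isometry B01 (fun i j ij => (AB_diag i j ij).2).
have xi_ge1 : 1 <= xi.
  have := opnorm_mulmx_invmx_ge1 n_gt0 C_unit.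
  have := opnorm_ge0 C; have := opnorm_ge0 (invmx C); nra.
have eps_ge0 : 0 <= eps by rewrite -E_eq opnorm_ge0.
have eps_xi_lt1 : eps * xi < 1 by apply: mul_lt1_of_lt_inv_fact eps_lt.
apply/eqP; rewrite eqn_leq; apply/andP; split.
  rewrite -(mxrank_conj B C_unit); apply: (partial_isometry_rank_le A_pi).
  have -> : A - C *m B *m invmx C = (A *m C - C *m B) *m invmx C.
    by rewrite mulmxBl mulmxK.
  rewrite (le_lt_trans (opnormM _ _)) // E_eq (le_lt_trans _ eps_xi_lt1) //.
  by rewrite ler_wpM2l.
rewrite -(@mxrank_conj _ _ (invmx C) A) ?unitmx_inv // invmxK.
apply: (partial_isometry_rank_le B_pi).
have -> : B - invmx C *m A *m C = - (invmx C *m (A *m C - C *m B)).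
  by rewrite mulmxBr !mulmxA mulVmx // mul1mx opprB.
rewrite opnormN (le_lt_trans (opnormM _ _)) // E_eq (le_lt_trans _ eps_xi_lt1) //.
by rewrite mulrC ler_wpM2l.
Qed.
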